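(* Let $\gamma,z\in\mathbb{R}$ with $1+\gamma z>0$, and let $D(\gamma,z)=\int_0^z\frac{t}{(1+\gamma t)^2}\,dt$. If $\gamma z>0$, then \[D(\gamma,z)\le\frac{z^2}{2}\quad\text{and}\quad D(\gamma,z)\le\frac1\gamma\log(1+\gamma z)\frac{z}{1+\gamma z}\le\min\Big\{\frac{z^2}{1+\gamma z},\ \frac1{\gamma^2}\log(1+\gamma z)\Big\}.\] If $-1<\gamma z<0$, then $D(\gamma,z)\le\frac{z^2}{1+\gamma z}$. Consequently, for all $\gamma,z$ with $1+\gamma z>0$, $0\le D(\gamma,z)\le \frac{z^2}{1+\gamma z}$.
   Context: $D(\gamma,z)$ equals $\partial_\gamma\log u_\gamma(z)$, where $u_\gamma(z)=\exp(-\int_0^z(1+\gamma t)^{-1}dt)$, i.e. $(1+\gamma z)^{-1/\gamma}$ for $\gamma\ne0$ and $e^{-z}$ for $\gamma=0$. *)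

From Stdlib Require Import Reals.
From Coquelicot Require Import Coquelicot.
Open Scope R_scope.

(* D(g,z) = \int_0^z t / (1 + g t)^2 dt  (oriented integral, so z<0 allowed) *)
Definition Dgz (g z : R) : R :=
  RInt (fun t => t / (1 + g * t) ^ 2) 0 z.

(* For g <> 0 the substitution u = g t gives D(g,z) = D(1, g z) / g^2, with
   D(1,u) = ln (1 + u) + 1 / (1 + u) - 1 in closed form. As z^2 = u^2 / g^2,
   every claimed bound becomes a one-variable inequality in u > -1, divided by
   g^2; all of them follow from 1 - 1/y <= ln y <= y - 1, except
   D(1,u) <= u^2/2, which holds because the difference vanishes at 0 and is
   nondecreasing on u >= 0. For g = 0, D(0,z) = z^2/2. *)

From Stdlib Require Import Reals Lra.
From Coquelicot Require Import Coquelicot.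
Open Scope R_scope.

Definition Dunit (u : R) : R := ln (1 + u) + / (1 + u) - 1.

Lemma ln_le_sub1 y : 0 < y -> ln y <= y - 1.
Proof.
  intros Hy. pose proof (exp_ineq1_le (ln y)) as Hexp.
  rewrite exp_ln in Hexp; lra.
Qed.

Lemma ln_ge_1_sub_inv y : 0 < y -> 1 - / y <= ln y.
Proof.
  intros Hy. pose proof (ln_le_sub1 (/ y) (Rinv_0_lt_compat _ Hy)) as Hinv.
  rewrite ln_Rinv in Hinv; lra.
Qed.

Lemma ln_1p_ge0 u : 0 <= u -> 0 <= ln (1 + u).
Proof.
  intros Hu. pose proof (ln_ge_1_sub_inv (1 + u)).
  assert (/ (1 + u) <= 1) by (rewrite <- Rinv_1; apply Rinv_le_contravar; lra).
  lra.
Qed.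

Lemma Dunit_ge0 u : -1 < u -> 0 <= Dunit u.
Proof. intros Hu. pose proof (ln_ge_1_sub_inv (1 + u)). unfold Dunit; lra. Qed.

Lemma Dunit_le_sqr_div u : -1 < u -> Dunit u <= u ^ 2 / (1 + u).
Proof.
  intros Hu. pose proof (ln_le_sub1 (1 + u)).
  replace (u ^ 2 / (1 + u)) with (u - 1 + / (1 + u)) by (field; lra).
  unfold Dunit; lra.
Qed.

Lemma Dunit_le_sqr_half u : 0 <= u -> Dunit u <= u ^ 2 / 2.
Proof.
  intros Hu. destruct (Req_dec u 0) as [->|Hu0].
  { unfold Dunit. rewrite Rplus_0_r, ln_1. lra. }
  set (h := fun x => x ^ 2 / 2 - Dunit x).
  destruct (MVT_cor2 h (fun x => x * ((1 + x) ^ 2 - 1) / (1 + x) ^ 2) 0 u)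
    as [c [Hdiff Hc]]; [lra| |].
  { intros c Hc. apply is_derive_Reals. unfold h, Dunit. auto_derive.
    - repeat split; lra.
    - field. lra. }
  assert (Hh0 : h 0 = 0) by (unfold h, Dunit; rewrite Rplus_0_r, ln_1; field).
  assert (0 <= c * ((1 + c) ^ 2 - 1) / (1 + c) ^ 2 * (u - 0)).
  { apply Rmult_le_pos; [|lra]. apply Rmult_le_pos.
    - apply Rmult_le_pos; nra.
    - left; apply Rinv_0_lt_compat; nra. }
  unfold h in *. lra.
Qed.

Lemma Dunit_le_ln_mul u : -1 < u -> Dunit u <= ln (1 + u) * (u / (1 + u)).
Proof.
  intros Hu. pose proof (ln_le_sub1 (1 + u)).
  assert (Hw : 0 < / (1 + u)) by (apply Rinv_0_lt_compat; lra).
  assert (Hgap : ln (1 + u) * (u / (1 + u)) - Dunit u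
                 = (u - ln (1 + u)) * / (1 + u)) by (unfold Dunit; field; lra).
  nra.
Qed.

Lemma ln_mul_le_sqr_div u : 0 <= u -> ln (1 + u) * (u / (1 + u)) <= u ^ 2 / (1 + u).
Proof.
  intros Hu. pose proof (ln_le_sub1 (1 + u)).
  unfold Rdiv. rewrite <- Rmult_assoc. apply Rmult_le_compat_r.
  - left; apply Rinv_0_lt_compat; lra.
  - nra.
Qed.

Lemma ln_mul_le_ln u : 0 <= u -> ln (1 + u) * (u / (1 + u)) <= ln (1 + u).
Proof.
  intros Hu. pose proof (ln_1p_ge0 u Hu).
  assert (u / (1 + u) <= 1) by (apply Rle_div_l; lra).
  nra.
Qed.

Lemma one_add_mul_pos_between g z x :
  0 < 1 + g * z -> Rmin 0 z <= x <= Rmax 0 z -> 0 < 1 + g * x.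
Proof.
  intros Hz [Hlo Hhi]. unfold Rmin, Rmax in *.
  destruct (Rle_dec 0 z); destruct (Rle_dec 0 g); nra.
Qed.

Lemma Dgz_0 z : Dgz 0 z = z ^ 2 / 2.
Proof.
  unfold Dgz. apply is_RInt_unique.
  replace (z ^ 2 / 2) with (minus ((fun t => t ^ 2 / 2) z) ((fun t => t ^ 2 / 2) 0))
    by (unfold minus, plus, opp; simpl; field).
  apply (is_RInt_derive (fun t => t ^ 2 / 2)).
  - intros x _. auto_derive; [easy | field].
  - intros x _. apply (ex_derive_continuous (V := R_NormedModule)). auto_derive. lra.
Qed.

Lemma Dgz_eq_Dunit g z : g <> 0 -> 0 < 1 + g * z -> Dgz g z = Dunit (g * z) / g ^ 2.
Proof.
  intros Hg Hz. unfold Dgz. apply is_RInt_unique.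
  set (F := fun t => (ln (1 + g * t) + / (1 + g * t)) / g ^ 2).
  replace (Dunit (g * z) / g ^ 2) with (minus (F z) (F 0)).
  2:{ unfold F, Dunit, minus, plus, opp; simpl.
      rewrite Rmult_0_r, Rplus_0_r, ln_1. field. lra. }
  apply (is_RInt_derive F (fun t => t / (1 + g * t) ^ 2)).
  - intros x Hx. pose proof (one_add_mul_pos_between g z x Hz Hx). unfold F.
    auto_derive; [repeat split; lra | field; split; lra].
  - intros x Hx. pose proof (one_add_mul_pos_between g z x Hz Hx).
    apply (ex_derive_continuous (V := R_NormedModule)).
    auto_derive. rewrite Rmult_1_r. apply Rgt_not_eq. nra.
Qed.

Lemma Rdiv_sqr_le g a b : g <> 0 -> a <= b -> a / g ^ 2 <= b / g ^ 2.
Proof.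
  intros Hg Hab. apply Rmult_le_compat_r; [|exact Hab].
  left. apply Rinv_0_lt_compat. rewrite <- Rsqr_pow2. exact (Rsqr_pos_lt g Hg).
Qed.

Theorem lemmaB1 (g z : R) (Hpos : 0 < 1 + g * z) :
  (0 < g * z ->
     Dgz g z <= z ^ 2 / 2 /\
     Dgz g z <= / g * ln (1 + g * z) * (z / (1 + g * z)) /\
     / g * ln (1 + g * z) * (z / (1 + g * z))
       <= Rmin (z ^ 2 / (1 + g * z)) (/ g ^ 2 * ln (1 + g * z))) /\
  (-1 < g * z < 0 -> Dgz g z <= z ^ 2 / (1 + g * z)) /\
  (0 <= Dgz g z /\ Dgz g z <= z ^ 2 / (1 + g * z)).
Proof.
  destruct (Req_dec g 0) as [->|Hg].
  { rewrite Dgz_0, Rmult_0_l, Rplus_0_r in *.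
    assert (0 <= z ^ 2) by nra. repeat split; lra. }
  rewrite (Dgz_eq_Dunit g z Hg Hpos).
  set (u := g * z) in *.
  assert (Hu : -1 < u) by lra.
  assert (Ehalf : z ^ 2 / 2 = u ^ 2 / 2 / g ^ 2) by (unfold u; field; exact Hg).
  assert (Ediv : z ^ 2 / (1 + u) = u ^ 2 / (1 + u) / g ^ 2)
    by (unfold u in *; field; split; [lra | exact Hg]).
  assert (Emul : / g * ln (1 + u) * (z / (1 + u)) = ln (1 + u) * (u / (1 + u)) / g ^ 2)
    by (unfold u in *; field; split; [lra | exact Hg]).
  assert (Eln : / g ^ 2 * ln (1 + u) = ln (1 + u) / g ^ 2) by (field; exact Hg).
  assert (Hsqr : Dunit u / g ^ 2 <= z ^ 2 / (1 + u))
    by (rewrite Ediv; apply Rdiv_sqr_le, Dunit_le_sqr_div; assumption).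
  split; [intros Hu0; split; [|split] | split; [intros _; exact Hsqr | split]].
  - rewrite Ehalf. apply Rdiv_sqr_le, Dunit_le_sqr_half; [exact Hg | lra].
  - rewrite Emul. apply Rdiv_sqr_le, Dunit_le_ln_mul; assumption.
  - rewrite Emul, Ediv, Eln. apply Rmin_glb; apply Rdiv_sqr_le; try exact Hg.
    + apply ln_mul_le_sqr_div. lra.
    + apply ln_mul_le_ln. lra.
  - replace 0 with (0 / g ^ 2) by (field; exact Hg).
    apply Rdiv_sqr_le, Dunit_ge0; assumption.
  - exact Hsqr.
Qed.
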